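(* For any integer $m\ge1$ there exist $\varepsilon>0$ small enough and $b\in\mathbb{R}$ such that, on $I(m,\varepsilon)$, $N(f_2+bf_3)=1$, where $f_2,f_3$ are the second and third eigenfunctions of the Laplacian.
   Context: $I(m,\varepsilon)$ is the metric graph with vertices $v_1,v_2,v_3,v_4$, an edge $e_1$ of length $1/2$ from $v_1$ to $v_2$, an edge $e_2$ of length $1/2$ from $v_3$ to $v_4$, and $m$ parallel edges of length $\varepsilon$ joining $v_2$ and $v_3$. The Laplacian $-\frac{d^2}{dx^2}$ acts edgewise with Dirichlet conditions at $v_1,v_4$ and Neumann–Kirchhoff conditions (continuity and vanishing sum of outgoing derivatives) at $v_2,v_3$; eigenvalues are ordered increasingly with multiplicity, with $L^2$-orthogonal eigenfunctions $f_1,f_2,\dots$. $N(f)$ is the number of zeroes of $f$ other than at $v_1,v_4$. *)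

From Stdlib Require Import Reals Lra.
From Coquelicot Require Import Coquelicot.
Open Scope R_scope.

Fixpoint sumR (n : nat) (F : nat -> R) : R :=
  match n with
  | O => 0
  | S k => sumR k F + F k
  end.

(* A real function on the metric graph I(m,eps):
   - ge1 : edge e1, parametrised by x in [0,1/2], x = 0 at v1, x = 1/2 at v2;
   - ge2 : edge e2, parametrised by x in [0,1/2], x = 0 at v3, x = 1/2 at v4;
   - gp j : j-th parallel edge (j < m), parametrised by x in [0,eps],
            x = 0 at v2, x = eps at v3.
   Only the values on these intervals are meaningful. *)
Record gfun := mkGfun {
  ge1 : R -> R;
  ge2 : R -> R;
  gp  : nat -> R -> R
}.

Definition gadd (f g : gfun) : gfun :=
  mkGfun (fun x => ge1 f x + ge1 g x) (fun x => ge2 f x + ge2 g x)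
         (fun j x => gp f j x + gp g j x).

Definition gscale (c : R) (f : gfun) : gfun :=
  mkGfun (fun x => c * ge1 f x) (fun x => c * ge2 f x) (fun j x => c * gp f j x).

Definition gcomb (n : nat) (c : nat -> R) (f : nat -> gfun) : gfun :=
  mkGfun (fun x => sumR n (fun k => c k * ge1 (f k) x))
         (fun x => sumR n (fun k => c k * ge2 (f k) x))
         (fun j x => sumR n (fun k => c k * gp (f k) j x)).

Definition geq_on (m : nat) (eps : R) (f g : gfun) : Prop :=
  (forall x, 0 <= x <= 1/2 -> ge1 f x = ge1 g x) /\
  (forall x, 0 <= x <= 1/2 -> ge2 f x = ge2 g x) /\
  (forall j x, (j < m)%nat -> 0 <= x <= eps -> gp f j x = gp g j x).

Definition gip (m : nat) (eps : R) (f g : gfun) : R :=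
  RInt (fun x => ge1 f x * ge1 g x) 0 (1/2) +
  RInt (fun x => ge2 f x * ge2 g x) 0 (1/2) +
  sumR m (fun j => RInt (fun x => gp f j x * gp g j x) 0 eps).

(* A C^2 solution on a closed interval extends
   uniquely to a solution on all of R, so we identify the edge function with
   that extension (this makes the endpoint derivatives ordinary derivatives). *)
Definition edge_eq (lam : R) (u : R -> R) : Prop :=
  forall x, ex_derive u x /\ is_derive (Derive u) x (- lam * u x).

(* f is an eigenfunction of the Laplacian on I(m,eps) with eigenvalue lam:
   edgewise equation, Dirichlet at v1 and v4, continuity and Kirchhoff
   (sum of outgoing derivatives = 0) at v2 and v3, and f nonzero. *)
Definition is_eigenfunction (m : nat) (eps lam : R) (f : gfun) : Prop :=
  edge_eq lam (ge1 f) /\ edge_eq lam (ge2 f) /\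
  (forall j, (j < m)%nat -> edge_eq lam (gp f j)) /\
  ge1 f 0 = 0 /\ ge2 f (1/2) = 0 /\
  (forall j, (j < m)%nat -> gp f j 0 = ge1 f (1/2)) /\
  (forall j, (j < m)%nat -> gp f j eps = ge2 f 0) /\
  (* Kirchhoff at v2: outgoing derivative along e1 is -ge1', along p_j is +p_j'(0) *)
  - Derive (ge1 f) (1/2) + sumR m (fun j => Derive (gp f j) 0) = 0 /\
  (* Kirchhoff at v3: outgoing along e2 is +ge2'(0), along p_j is -p_j'(eps) *)
  Derive (ge2 f) 0 - sumR m (fun j => Derive (gp f j) eps) = 0 /\
  ~ geq_on m eps f (mkGfun (fun _ => 0) (fun _ => 0) (fun _ _ => 0)).

(* Index shift: lam k, f k are the paper's lambda_{k+1}, f_{k+1}.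
   Completeness: every eigenfunction is a finite linear combination of the f k,
   which (with orthogonality and monotonicity) forces every eigenvalue to
   appear exactly with its multiplicity. *)
Definition is_eigenbasis (m : nat) (eps : R) (lam : nat -> R) (f : nat -> gfun) : Prop :=
  (forall k, is_eigenfunction m eps (lam k) (f k)) /\
  (forall k l, (k <= l)%nat -> lam k <= lam l) /\
  (forall k l, k <> l -> gip m eps (f k) (f l) = 0) /\
  (forall mu g, is_eigenfunction m eps mu g ->
     exists (n : nat) (c : nat -> R), geq_on m eps g (gcomb n c f)).

(* Points of I(m,eps) other than v1 and v4, each represented exactly once. *)
Inductive gpoint :=
  | PtE1 (x : R)
  | PtE2 (x : R)
  | PtP (j : nat) (x : R)
  | PtV2
  | PtV3.

Definition valid_point (m : nat) (eps : R) (p : gpoint) : Prop :=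
  match p with
  | PtE1 x => 0 < x < 1/2
  | PtE2 x => 0 < x < 1/2
  | PtP j x => (j < m)%nat /\ 0 < x < eps
  | PtV2 => True
  | PtV3 => True
  end.

Definition geval (f : gfun) (p : gpoint) : R :=
  match p with
  | PtE1 x => ge1 f x
  | PtE2 x => ge2 f x
  | PtP j x => gp f j x
  | PtV2 => ge1 f (1/2)
  | PtV3 => ge2 f 0
  end.

Definition N_is_one (m : nat) (eps : R) (f : gfun) : Prop :=
  exists! p, valid_point m eps p /\ geval f p = 0.

From Stdlib Require Import Reals Lra Lia Classical.
From Coquelicot Require Import Coquelicot.
Open Scope R_scope.

(* On each edge an eigenfunction with eigenvalue k^2 is a sinusoid, and the vertex conditions
   become a linear system in its coefficients whose determinant is, up to a factor,
   secular_anti k * secular_sym k.  Hence every eigenfunction is a multiple of the explicit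
   function Ganti (antisymmetric under the reflection exchanging e1 and e2) or Gsym (symmetric).
   For m eps <= 1/100 the only roots in (0, 3 pi] are k1 in (0, pi) and k3 in (2 pi, 3 pi) for
   Gsym and k2 in (3 pi/2, 2 pi) for Ganti.  As eigenfunctions of distinct eigenvalues are
   orthogonal and every eigenvalue occurs in the eigenbasis, these eigenvalues are simple and
   f_2, f_3 are multiples of Ganti k2 and Gsym k3.  Taking b so that f_2 + b f_3 vanishes at v2,
   elementary sine estimates show that it is positive on e1 and negative on e2 and on the
   parallel edges. *)

Lemma sumR_ext n F G : (forall k, (k < n)%nat -> F k = G k) -> sumR n F = sumR n G.
Proof. induction n; simpl; intros H; auto. rewrite IHn, H; auto; intros; apply H; lia. Qed.

Lemma sumR_plus n F G : sumR n (fun k => F k + G k) = sumR n F + sumR n G.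
Proof. induction n; simpl; [ring | rewrite IHn; ring]. Qed.

Lemma sumR_minus n F G : sumR n (fun k => F k - G k) = sumR n F - sumR n G.
Proof. induction n; simpl; [ring | rewrite IHn; ring]. Qed.

Lemma sumR_scal n c F : sumR n (fun k => c * F k) = c * sumR n F.
Proof. induction n; simpl; [ring | rewrite IHn; ring]. Qed.

Lemma sumR_const n c : sumR n (fun _ => c) = INR n * c.
Proof. induction n; simpl sumR; [simpl; ring | rewrite IHn, S_INR; ring]. Qed.

Lemma sumR_ext_const n F c : (forall k, (k < n)%nat -> F k = c) -> sumR n F = INR n * c.
Proof. intros H. rewrite (sumR_ext n F (fun _ => c)) by exact H. apply sumR_const. Qed.

Lemma sumR_nonneg n F : (forall k, (k < n)%nat -> 0 <= F k) -> 0 <= sumR n F.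
Proof.
  induction n; simpl; intros H; [lra|].
  assert (0 <= F n) by (apply H; lia).
  assert (0 <= sumR n F) by (apply IHn; intros; apply H; lia).
  lra.
Qed.

Lemma sumR_le_term n F j : (forall k, (k < n)%nat -> 0 <= F k) -> (j < n)%nat -> F j <= sumR n F.
Proof.
  induction n; simpl; intros H Hj; [lia|].
  assert (0 <= sumR n F) by (apply sumR_nonneg; intros; apply H; lia).
  destruct (Nat.eq_dec j n) as [->|Hne]; [lra|].
  assert (F j <= sumR n F) by (apply IHn; [intros; apply H|]; lia).
  assert (0 <= F n) by (apply H; lia).
  lra.
Qed.

Lemma sumR_single n F j : (j < n)%nat -> (forall k, (k < n)%nat -> k <> j -> F k = 0) ->
  sumR n F = F j.
Proof.
  induction n; intros Hj H; [lia|]. simpl.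
  destruct (Nat.eq_dec j n) as [->|Hne].
  - rewrite (sumR_ext_const n F 0); [ring|]. intros k Hk; apply H; lia.
  - rewrite IHn, (H n); [ring | lia | auto | lia | intros; apply H; lia].
Qed.

Lemma sumR_swap n m (F : nat -> nat -> R) :
  sumR n (fun k => sumR m (fun j => F k j)) = sumR m (fun j => sumR n (fun k => F k j)).
Proof.
  induction n; simpl.
  - symmetry; rewrite (sumR_ext_const m _ 0); [ring | auto].
  - rewrite IHn, <- sumR_plus. reflexivity.
Qed.

Lemma is_derive_mult_R (f g : R -> R) x a b : is_derive f x a -> is_derive g x b ->
  is_derive (fun t => f t * g t) x (a * g x + f x * b).
Proof. intros Hf Hg. apply (is_derive_mult f g x a b Hf Hg). intros; apply Rmult_comm. Qed.

Lemma is_derive_0_constant (F : R -> R) : (forall x, is_derive F x 0) -> forall x y, F x = F y.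
Proof.
  intros H x y.
  destruct (MVT_gen F x y (fun _ => 0)) as [c [_ Hc]].
  - intros; apply H.
  - intros z _. apply derivable_continuous_pt, ex_derive_Reals_0. eexists; apply H.
  - lra.
Qed.

Lemma continuous_mult_R (f g : R -> R) x : continuous f x -> continuous g x ->
  continuous (fun y => f y * g y) x.
Proof. intros; apply (continuous_mult f g); auto. Qed.

Lemma continuous_scal_R (f : R -> R) c x : continuous f x -> continuous (fun y => c * f y) x.
Proof. intros; apply (continuous_mult (fun _ => c) f); auto. apply continuous_const. Qed.

(** * Solutions of the edge equation *)

Lemma oscillator_zero lam (w w' : R -> R) : 0 <= lam ->
  (forall x, is_derive w x (w' x)) -> (forall x, is_derive w' x (- lam * w x)) ->
  w 0 = 0 -> w' 0 = 0 -> forall x, w x = 0.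
Proof.
  intros Hl Hw Hw' H0 H0' x.
  assert (energy_conserved : forall y, w' y * w' y + lam * (w y * w y) = 0).
  { intro y. set (E := fun t => w' t * w' t + lam * (w t * w t)).
    change (E y = 0). replace 0 with (E 0) by (unfold E; rewrite H0, H0'; ring).
    apply is_derive_0_constant. intro t.
    replace 0 with ((- lam * w t) * w' t + w' t * (- lam * w t)
                    + lam * (w' t * w t + w t * w' t)) by ring.
    apply (is_derive_plus (fun t => w' t * w' t) (fun t => lam * (w t * w t))).
    - apply is_derive_mult_R; apply Hw'.
    - apply is_derive_scal, is_derive_mult_R; apply Hw. }
  destruct (Rle_lt_or_eq_dec 0 lam Hl) as [Hp | <-].
  - specialize (energy_conserved x). assert (w x * w x = 0) by nra. nra.
  - rewrite <- H0. apply is_derive_0_constant. intro t.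
    specialize (energy_conserved t). replace 0 with (w' t) by nra. apply Hw.
Qed.

Lemma edge_eq_unique lam u v : 0 <= lam -> edge_eq lam u -> edge_eq lam v ->
  u 0 = v 0 -> Derive u 0 = Derive v 0 -> forall x, u x = v x.
Proof.
  intros Hl Hu Hv H0 H0' x.
  apply Rminus_diag_uniq.
  apply (oscillator_zero lam (fun t => u t - v t) (fun t => Derive u t - Derive v t) Hl).
  - intro t. apply (is_derive_minus u v); apply Derive_correct; [apply Hu | apply Hv].
  - intro t. replace (- lam * (u t - v t)) with (- lam * u t - - lam * v t) by ring.
    apply (is_derive_minus (Derive u) (Derive v)); [apply Hu | apply Hv].
  - lra.
  - lra.
Qed.

Lemma edge_eq_ext lam (u v : R -> R) : (forall x, u x = v x) -> edge_eq lam u -> edge_eq lam v.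
Proof.
  intros E H x. destruct (H x) as [H1 H2]. split.
  - apply (ex_derive_ext u v); auto.
  - rewrite <- E. apply (is_derive_ext (Derive u) (Derive v)); auto.
    intro t; apply Derive_ext; auto.
Qed.

Definition sinusoid (k A B x : R) : R := A * cos (k * x) + B * sin (k * x).

Lemma sinusoid_0 k A B : sinusoid k A B 0 = A.
Proof. unfold sinusoid. rewrite Rmult_0_r, cos_0, sin_0. ring. Qed.

Lemma sinusoid_scal k a A B x : sinusoid k (a * A) (a * B) x = a * sinusoid k A B x.
Proof. unfold sinusoid. ring. Qed.

Lemma is_derive_sinusoid k A B x : is_derive (sinusoid k A B) x (k * sinusoid k B (- A) x).
Proof. unfold sinusoid. auto_derive; auto. ring. Qed.

Lemma Derive_sinusoid (u : R -> R) k A B : (forall y, u y = sinusoid k A B y) ->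
  forall x, Derive u x = k * sinusoid k B (- A) x.
Proof. intros E x. rewrite (Derive_ext u _ x E). apply is_derive_unique, is_derive_sinusoid. Qed.

Lemma sinusoid_edge_eq k A B : edge_eq (k * k) (sinusoid k A B).
Proof.
  intro x. split; [eexists; apply is_derive_sinusoid|].
  apply (is_derive_ext (fun y => k * sinusoid k B (- A) y)).
  - intro t. symmetry. apply (Derive_sinusoid _ k A B). reflexivity.
  - replace (- (k * k) * sinusoid k A B x) with (k * (k * sinusoid k (- A) (- B) x))
      by (unfold sinusoid; ring).
    apply is_derive_scal, is_derive_sinusoid.
Qed.

Lemma edge_eq_sinusoid k u : 0 < k -> edge_eq (k * k) u ->
  forall x, u x = sinusoid k (u 0) (Derive u 0 / k) x.
Proof.
  intros Hk Hu. apply (edge_eq_unique (k * k)); [nra | exact Hu | apply sinusoid_edge_eq | |].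
  - now rewrite sinusoid_0.
  - rewrite (Derive_sinusoid (sinusoid k (u 0) (Derive u 0 / k)) k (u 0) (Derive u 0 / k))
      by reflexivity.
    rewrite sinusoid_0. field. lra.
Qed.

Lemma edge_eq_affine u : edge_eq 0 u -> forall x, u x = u 0 + Derive u 0 * x.
Proof.
  intros Hu. apply (edge_eq_unique 0); [lra | exact Hu | | |].
  - intro x. split; [auto_derive; auto|].
    apply (is_derive_ext (fun _ => Derive u 0)).
    + intro t. symmetry. apply is_derive_unique. auto_derive; auto. ring.
    + replace (- 0 * (u 0 + Derive u 0 * x)) with 0 by ring. auto_derive; auto.
  - ring.
  - symmetry. apply is_derive_unique. auto_derive; auto. ring.
Qed.

(** * Green's formula and the eigenbasis *)

Definition C1 (p : R -> R) : Prop := (forall x, ex_derive p x) /\ (forall x, continuous (Derive p) x).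

Lemma edge_eq_C1 lam p : edge_eq lam p -> C1 p.
Proof.
  intros H; split; intro x; [apply H|].
  apply (ex_derive_continuous (K := R_AbsRing) (Derive p)). eexists; apply H.
Qed.

Lemma C1_continuous p x : C1 p -> continuous p x.
Proof. intros [H _]; apply (ex_derive_continuous (K := R_AbsRing) p), H. Qed.

Lemma ex_RInt_continuous_R (f : R -> R) a b : (forall x, continuous f x) -> ex_RInt f a b.
Proof. intros H. apply (ex_RInt_continuous (V := R_CompleteNormedModule)); auto. Qed.

Lemma ex_RInt_C1_mult p q a b : C1 p -> C1 q -> ex_RInt (fun x => p x * q x) a b.
Proof. intros Hp Hq. apply ex_RInt_continuous_R. intros; apply continuous_mult_R; apply C1_continuous; auto. Qed.

Lemma RInt_ext_R (f g : R -> R) a b : (forall x, Rmin a b < x < Rmax a b -> f x = g x) ->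
  RInt f a b = RInt g a b.
Proof. apply (RInt_ext (V := R_CompleteNormedModule)). Qed.

Lemma RInt_scal_R (f : R -> R) c a b : ex_RInt f a b -> RInt (fun x => c * f x) a b = c * RInt f a b.
Proof. apply (RInt_scal (V := R_CompleteNormedModule)). Qed.

Lemma RInt_sqr_nonneg (g : R -> R) a b : a <= b -> (forall x, continuous g x) ->
  0 <= RInt (fun x => g x * g x) a b.
Proof.
  intros Hab Hg. apply RInt_ge_0; auto.
  - apply ex_RInt_continuous_R; intros; apply continuous_mult_R; auto.
  - intros; nra.
Qed.

Lemma RInt_sqr_pos (g : R -> R) a b x0 : a < b -> a <= x0 <= b -> (forall x, continuous g x) ->
  g x0 <> 0 -> 0 < RInt (fun x => g x * g x) a b.
Proof.
  intros Hab Hx0 Hg Hne.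
  set (h := fun x => g x * g x).
  assert (Hh : forall x, continuous h x) by (intros; apply continuous_mult_R; auto).
  assert (Hpos : 0 < h x0) by (unfold h; assert (0 < g x0 * g x0) by (apply Rsqr_pos_lt; auto); lra).
  assert (Hloc : locally x0 (fun x => h x0 / 2 < h x)).
  { apply (Hh x0 (fun y => h x0 / 2 < y)). apply open_gt. lra. }
  destruct Hloc as [d Hd].
  set (c := Rmax a (x0 - d / 2)). set (e := Rmin b (x0 + d / 2)).
  assert (Hd2 : 0 < d / 2) by (pose proof (cond_pos d); lra).
  assert (Hce : a <= c < e /\ e <= b /\ x0 - d / 2 <= c /\ e <= x0 + d / 2).
  { unfold c, e, Rmax, Rmin. destruct (Rle_dec a (x0 - d / 2)), (Rle_dec b (x0 + d / 2)); lra. }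
  assert (Hex : forall p q, ex_RInt h p q) by (intros; apply ex_RInt_continuous_R, Hh).
  change (0 < RInt h a b).
  rewrite <- (RInt_Chasles (V := R_CompleteNormedModule) h a c b), <- (RInt_Chasles (V := R_CompleteNormedModule) h c e b) by auto.
  assert (0 <= RInt h a c) by (apply RInt_sqr_nonneg; tauto).
  assert (0 <= RInt h e b) by (apply RInt_sqr_nonneg; tauto).
  assert (0 < RInt h c e).
  { apply RInt_gt_0; [tauto | | intros; apply Hh].
    intros x Hx. assert (h x0 / 2 < h x); [|lra].
    apply Hd. apply (Rabs_lt_between' x x0 d). lra. }
  unfold plus; simpl. lra.
Qed.

Lemma edge_green (p q : R -> R) lam a b : C1 p -> edge_eq lam q ->
  RInt (fun x => Derive p x * Derive q x) a b - lam * RInt (fun x => p x * q x) a b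
  = p b * Derive q b - p a * Derive q a.
Proof.
  intros Hp Hq. pose proof (edge_eq_C1 _ _ Hq) as Hq1.
  assert (Hc : forall x, continuous p x) by (intros; apply C1_continuous; auto).
  assert (Hcq : forall x, continuous q x) by (intros; apply C1_continuous; auto).
  assert (HI : is_RInt (fun x => Derive p x * Derive q x + p x * (- lam * q x)) a b
                 (p b * Derive q b - p a * Derive q a)).
  { apply (is_RInt_derive (V := R_CompleteNormedModule) (fun x => p x * Derive q x)).
    - intros x _. apply is_derive_mult_R; [apply Derive_correct, Hp | apply Hq].
    - intros x _. apply (continuous_plus (fun x => Derive p x * Derive q x)).
      + apply continuous_mult_R; [apply Hp | apply Hq1].
      + apply continuous_mult_R, continuous_scal_R; auto. }
  apply (is_RInt_unique (V := R_CompleteNormedModule)) in HI. rewrite <- HI.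
  rewrite (RInt_plus (V := R_CompleteNormedModule) (fun x => Derive p x * Derive q x)).
  - rewrite (RInt_ext_R (fun x => p x * (- lam * q x)) (fun x => - lam * (p x * q x))) by (intros; ring).
    rewrite RInt_scal_R by (apply ex_RInt_C1_mult; auto).
    unfold plus; simpl. ring.
  - apply ex_RInt_continuous_R. intros; apply continuous_mult_R; [apply Hp | apply Hq1].
  - apply ex_RInt_continuous_R. intros; apply continuous_mult_R, continuous_scal_R; auto.
Qed.

Definition gdirichlet (m : nat) (eps : R) (u v : gfun) : R :=
  RInt (fun x => Derive (ge1 u) x * Derive (ge1 v) x) 0 (1/2) +
  RInt (fun x => Derive (ge2 u) x * Derive (ge2 v) x) 0 (1/2) +
  sumR m (fun j => RInt (fun x => Derive (gp u j) x * Derive (gp v j) x) 0 eps).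

Lemma eigenfunction_C1 m eps lam u : is_eigenfunction m eps lam u ->
  C1 (ge1 u) /\ C1 (ge2 u) /\ (forall j, (j < m)%nat -> C1 (gp u j)).
Proof.
  intros (H1 & H2 & Hp & _).
  split; [|split]; [eapply edge_eq_C1; eauto .. | intros j Hj; eapply edge_eq_C1; eauto].
Qed.

Lemma eigenfunction_green m eps lu lv u v :
  is_eigenfunction m eps lu u -> is_eigenfunction m eps lv v ->
  gdirichlet m eps u v = lv * gip m eps u v.
Proof.
  intros Hu Hv. destruct (eigenfunction_C1 _ _ _ _ Hu) as (S1 & S2 & Sp).
  destruct Hu as (_ & _ & _ & Hd1 & Hd2 & Hc2 & Hc3 & _).
  destruct Hv as (Hv1 & Hv2 & Hvp & _ & _ & _ & _ & Hk2 & Hk3 & _).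
  apply Rminus_diag_uniq. unfold gdirichlet, gip.
  transitivity ((RInt (fun x => Derive (ge1 u) x * Derive (ge1 v) x) 0 (1/2)
                   - lv * RInt (fun x => ge1 u x * ge1 v x) 0 (1/2)) +
                (RInt (fun x => Derive (ge2 u) x * Derive (ge2 v) x) 0 (1/2)
                   - lv * RInt (fun x => ge2 u x * ge2 v x) 0 (1/2)) +
                sumR m (fun j => RInt (fun x => Derive (gp u j) x * Derive (gp v j) x) 0 eps
                   - lv * RInt (fun x => gp u j x * gp v j x) 0 eps)).
  { rewrite sumR_minus, sumR_scal. ring. }
  rewrite (edge_green _ _ lv _ _ S1 Hv1), (edge_green _ _ lv _ _ S2 Hv2).
  rewrite (sumR_ext m _ (fun j => ge2 u 0 * Derive (gp v j) eps - ge1 u (1/2) * Derive (gp v j) 0)).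
  - rewrite sumR_minus, !sumR_scal, Hd1, Hd2.
    replace (sumR m (fun j => Derive (gp v j) 0)) with (Derive (ge1 v) (1/2)) by lra.
    replace (sumR m (fun j => Derive (gp v j) eps)) with (Derive (ge2 v) 0) by lra.
    ring.
  - intros j Hj. rewrite (edge_green _ _ lv _ _ (Sp j Hj) (Hvp j Hj)), Hc2, Hc3; auto.
Qed.

Lemma gdirichlet_sym m eps u v : gdirichlet m eps u v = gdirichlet m eps v u.
Proof.
  unfold gdirichlet. f_equal; [f_equal|]; try apply sumR_ext; intros; apply RInt_ext_R; intros; ring.
Qed.

Lemma gip_sym m eps u v : gip m eps u v = gip m eps v u.
Proof.
  unfold gip. f_equal; [f_equal|]; try apply sumR_ext; intros; apply RInt_ext_R; intros; ring.
Qed.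

Lemma eigenfunction_orthogonal m eps lu lv u v :
  is_eigenfunction m eps lu u -> is_eigenfunction m eps lv v -> lu <> lv -> gip m eps u v = 0.
Proof.
  intros Hu Hv Hne.
  pose proof (eigenfunction_green _ _ _ _ _ _ Hu Hv) as G1.
  pose proof (eigenfunction_green _ _ _ _ _ _ Hv Hu) as G2.
  rewrite gdirichlet_sym, gip_sym in G2.
  apply (Rmult_eq_reg_l (lu - lv)); [|lra]. lra.
Qed.

Lemma gip_self_pos m eps lam u : 0 < eps -> is_eigenfunction m eps lam u -> 0 < gip m eps u u.
Proof.
  intros He Hu. destruct (eigenfunction_C1 _ _ _ _ Hu) as (S1 & S2 & Sp).
  destruct Hu as (_ & _ & _ & _ & _ & _ & _ & _ & _ & Hnz).
  assert (N1 : 0 <= RInt (fun x => ge1 u x * ge1 u x) 0 (1/2))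
    by (apply RInt_sqr_nonneg; [lra | intros; apply C1_continuous; auto]).
  assert (N2 : 0 <= RInt (fun x => ge2 u x * ge2 u x) 0 (1/2))
    by (apply RInt_sqr_nonneg; [lra | intros; apply C1_continuous; auto]).
  assert (Np : forall j, (j < m)%nat -> 0 <= RInt (fun x => gp u j x * gp u j x) 0 eps)
    by (intros; apply RInt_sqr_nonneg; [lra | intros; apply C1_continuous; auto]).
  pose proof (sumR_nonneg m _ Np).
  unfold gip. apply Rnot_le_lt. intro Hle. apply Hnz. split; [|split]; simpl.
  - intros x Hx. destruct (Req_dec (ge1 u x) 0) as [|Hne]; auto.
    exfalso.
    assert (0 < RInt (fun x => ge1 u x * ge1 u x) 0 (1/2)); [|lra].
    apply (RInt_sqr_pos _ _ _ x); [lra | lra | intros; apply C1_continuous; auto | auto].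
  - intros x Hx. destruct (Req_dec (ge2 u x) 0) as [|Hne]; auto. exfalso.
    assert (0 < RInt (fun x => ge2 u x * ge2 u x) 0 (1/2)); [|lra].
    apply (RInt_sqr_pos _ _ _ x); [lra | lra | intros; apply C1_continuous; auto | auto].
  - intros j x Hj Hx. destruct (Req_dec (gp u j x) 0) as [|Hne]; auto. exfalso.
    pose proof (sumR_le_term m _ j Np Hj).
    assert (0 < RInt (fun x => gp u j x * gp u j x) 0 eps); [|lra].
    apply (RInt_sqr_pos _ _ _ x); [lra | lra | intros; apply C1_continuous; auto | auto].
Qed.

Lemma eigenvalue_nonneg m eps lam u : 0 < eps -> is_eigenfunction m eps lam u -> 0 <= lam.
Proof.
  intros He Hu.
  pose proof (gip_self_pos _ _ _ _ He Hu) as Hp.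
  pose proof (eigenfunction_green _ _ _ _ _ _ Hu Hu) as G.
  destruct (eigenfunction_C1 _ _ _ _ Hu) as (S1 & S2 & Sp).
  assert (0 <= gdirichlet m eps u u).
  { unfold gdirichlet.
    assert (0 <= RInt (fun x => Derive (ge1 u) x * Derive (ge1 u) x) 0 (1/2))
      by (apply RInt_sqr_nonneg; [lra | apply S1]).
    assert (0 <= RInt (fun x => Derive (ge2 u) x * Derive (ge2 u) x) 0 (1/2))
      by (apply RInt_sqr_nonneg; [lra | apply S2]).
    assert (0 <= sumR m (fun j => RInt (fun x => Derive (gp u j) x * Derive (gp u j) x) 0 eps))
      by (apply sumR_nonneg; intros; apply RInt_sqr_nonneg; [lra | apply Sp; auto]).
    lra. }
  destruct (Rle_dec 0 lam); auto. nra.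
Qed.

Lemma RInt_sumR_mult n (c : nat -> R) (p : nat -> R -> R) (q : R -> R) a b :
  (forall k, (k < n)%nat -> C1 (p k)) -> C1 q ->
  RInt (fun x => sumR n (fun k => c k * p k x) * q x) a b =
  sumR n (fun k => c k * RInt (fun x => p k x * q x) a b).
Proof.
  induction n; intros Hp Hq; simpl.
  - rewrite (RInt_ext_R _ (fun _ => 0)) by (intros; ring).
    rewrite RInt_const. unfold scal; simpl; unfold mult; simpl; ring.
  - assert (Hcont : forall x, continuous (fun x => sumR n (fun k => c k * p k x)) x).
    { intro x. clear IHn. induction n; simpl; [apply continuous_const|].
      apply (continuous_plus (fun x => sumR n (fun k => c k * p k x))).
      - apply IHn; intros; apply Hp; lia.
      - apply continuous_scal_R, C1_continuous, Hp; lia. }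
    rewrite (RInt_ext_R _ (fun x => plus (sumR n (fun k => c k * p k x) * q x) (c n * (p n x * q x))))
      by (intros; unfold plus; simpl; ring).
    rewrite (RInt_plus (V := R_CompleteNormedModule)).
    + rewrite RInt_scal_R, IHn by (try apply ex_RInt_C1_mult; auto; intros; apply Hp; lia).
      reflexivity.
    + apply ex_RInt_continuous_R. intros. apply continuous_mult_R; [apply Hcont | apply C1_continuous; auto].
    + apply ex_RInt_continuous_R. intros.
      apply continuous_scal_R, continuous_mult_R; apply C1_continuous; auto.
Qed.

Lemma gip_gcomb m eps n c f h lamf lamh :
  (forall k, is_eigenfunction m eps (lamf k) (f k)) -> is_eigenfunction m eps lamh h ->
  gip m eps (gcomb n c f) h = sumR n (fun k => c k * gip m eps (f k) h).
Proof.
  intros Hf Hh. destruct (eigenfunction_C1 _ _ _ _ Hh) as (T1 & T2 & Tp).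
  assert (S1 : forall k, C1 (ge1 (f k))) by (intro k; exact (proj1 (eigenfunction_C1 _ _ _ _ (Hf k)))).
  assert (S2 : forall k, C1 (ge2 (f k))) by (intro k; exact (proj1 (proj2 (eigenfunction_C1 _ _ _ _ (Hf k))))).
  assert (Sp : forall k j, (j < m)%nat -> C1 (gp (f k) j))
    by (intro k; exact (proj2 (proj2 (eigenfunction_C1 _ _ _ _ (Hf k))))).
  unfold gip, gcomb; simpl.
  rewrite (RInt_sumR_mult n c (fun k => ge1 (f k)) (ge1 h)) by auto.
  rewrite (RInt_sumR_mult n c (fun k => ge2 (f k)) (ge2 h)) by auto.
  rewrite (sumR_ext m _ (fun j => sumR n (fun k => c k * RInt (fun x => gp (f k) j x * gp h j x) 0 eps)))
    by (intros; apply RInt_sumR_mult; auto).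
  rewrite sumR_swap, <- !sumR_plus. apply sumR_ext. intros k _. rewrite sumR_scal. ring.
Qed.

Lemma gip_geq_on m eps g g' h : 0 <= eps -> geq_on m eps g g' -> gip m eps g h = gip m eps g' h.
Proof.
  intros He (E1 & E2 & Ep). unfold gip.
  f_equal; [f_equal|]; try apply sumR_ext; intros; apply RInt_ext_R;
    rewrite Rmin_left, Rmax_right by lra; intros; [rewrite E1 | rewrite E2 | rewrite Ep]; auto; lra.
Qed.

Lemma eigenbasis_complete_eigenvalue m eps lam f mu g : 0 < eps -> is_eigenbasis m eps lam f ->
  is_eigenfunction m eps mu g -> exists j, lam j = mu.
Proof.
  intros He (Hf & _ & Horth & Hcomp) Hg.
  apply NNPP. intro Hno.
  destruct (Hcomp mu g Hg) as [n [c Hc]].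
  assert (Hz : forall j, (j < n)%nat -> c j = 0).
  { intros j Hj.
    assert (G0 : gip m eps g (f j) = 0).
    { apply (eigenfunction_orthogonal m eps mu (lam j)); auto. intro E; apply Hno; eauto. }
    rewrite (gip_geq_on _ _ _ _ _ (Rlt_le _ _ He) Hc), (gip_gcomb m eps n c f (f j) lam (lam j)) in G0
      by auto.
    rewrite (sumR_single n _ j) in G0 by (auto; intros k Hk Hkj; rewrite (Horth k j); auto; ring).
    pose proof (gip_self_pos _ _ _ _ He (Hf j)).
    apply Rmult_integral in G0; destruct G0; auto; lra. }
  destruct Hg as (_ & _ & _ & _ & _ & _ & _ & _ & _ & Hnz). apply Hnz.
  destruct Hc as (E1 & E2 & Ep). simpl in *.
  split; [|split]; simpl; intros; [rewrite E1 | rewrite E2 | rewrite Ep]; auto;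
    rewrite (sumR_ext_const n _ 0); try ring; intros k Hk; rewrite Hz; auto; ring.
Qed.

(** * Sinusoidal eigenfunctions *)

(** The vertex conditions for the sinusoids [sinusoid k 0 B1] on [e1], [sinusoid k A2 B2] on
    [e2] and [sinusoid k Ap Bp] on every parallel edge, with [M = INR m], [s, c = sin, cos (k/2)],
    [S, C = sin, cos (k eps)], the Kirchhoff laws being divided by [k]. *)
Definition vertex_conditions (M s c S C B1 A2 B2 Ap Bp : R) : Prop :=
  A2 * c + B2 * s = 0 /\ Ap = B1 * s /\ Ap * C + Bp * S = A2 /\
  B1 * c = M * Bp /\ B2 = M * (Bp * C - Ap * S).

Section VertexAlgebra.
Variables M s c sa ca : R.
Hypothesis HM : M <> 0.
Hypothesis Hpyth : sa * sa + ca * ca = 1.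

Lemma vertex_conditions_secular B1 A2 B2 Ap Bp :
  vertex_conditions M s c (2 * sa * ca) (ca * ca - sa * sa) B1 A2 B2 Ap Bp ->
  B1 * ((M * s * ca + sa * c) * (c * ca - M * sa * s)) = 0.
Proof.
  intros (H1 & -> & H3 & H4 & ->). subst A2.
  apply (Rmult_eq_reg_l 2); [|lra].
  transitivity (M * ((B1 * s * (ca * ca - sa * sa) + Bp * (2 * sa * ca)) * c
                 + M * (Bp * (ca * ca - sa * sa) - B1 * s * (2 * sa * ca)) * s)
                - (M * Bp - B1 * c) * (2 * sa * ca * c + M * (ca * ca - sa * sa) * s)).
  - ring.
  - rewrite H1, <- H4. ring.
Qed.

Lemma vertex_conditions_trivial A2 B2 Ap Bp :
  vertex_conditions M s c (2 * sa * ca) (ca * ca - sa * sa) 0 A2 B2 Ap Bp ->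
  A2 = 0 /\ B2 = 0 /\ Ap = 0 /\ Bp = 0.
Proof.
  intros (_ & -> & <- & H4 & ->).
  assert (Bp = 0) as -> by (apply (Rmult_eq_reg_l M); [lra | auto]).
  split; [|split; [|split]]; ring.
Qed.

Lemma vertex_conditions_anti B1 A2 B2 Ap Bp : sa <> 0 -> M * s * ca + sa * c = 0 ->
  vertex_conditions M s c (2 * sa * ca) (ca * ca - sa * sa) B1 A2 B2 Ap Bp <->
  A2 = B1 * - s /\ B2 = B1 * c /\ Ap = B1 * s /\ Bp = B1 * - (s * ca / sa).
Proof.
  intros Hsa HF.
  assert (Hc : c = - (M * s * ca / sa)).
  { apply (Rmult_eq_reg_l sa); [field_simplify; [lra | auto] | auto]. }
  assert (HBp : B1 * c = M * Bp <-> Bp = B1 * - (s * ca / sa)).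
  { rewrite Hc. split; intros H.
    - apply (Rmult_eq_reg_l M); [rewrite <- H; field | ]; auto.
    - rewrite H. field. auto. }
  assert (HA2 : B1 * s * (ca * ca - sa * sa) + B1 * - (s * ca / sa) * (2 * sa * ca) = B1 * - s).
  { field_simplify; [|auto]. pose proof (f_equal (Rmult (B1 * s)) Hpyth). lra. }
  assert (HB2 : M * (B1 * - (s * ca / sa) * (ca * ca - sa * sa) - B1 * s * (2 * sa * ca)) = B1 * c).
  { rewrite Hc. replace (ca * ca - sa * sa) with (1 - 2 * (sa * sa)) by lra. field. auto. }
  unfold vertex_conditions. rewrite HBp. split.
  - intros (_ & -> & <- & -> & ->). auto.
  - intros (-> & -> & -> & ->). repeat split; auto. rewrite Hc. field. auto.
Qed.

Lemma vertex_conditions_sym B1 A2 B2 Ap Bp : ca <> 0 -> c * ca - M * sa * s = 0 ->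
  vertex_conditions M s c (2 * sa * ca) (ca * ca - sa * sa) B1 A2 B2 Ap Bp <->
  A2 = B1 * s /\ B2 = B1 * - c /\ Ap = B1 * s /\ Bp = B1 * (s * sa / ca).
Proof.
  intros Hca HF.
  assert (Hc : c = M * sa * s / ca).
  { apply (Rmult_eq_reg_l ca); [field_simplify; [lra | auto] | auto]. }
  assert (HBp : B1 * c = M * Bp <-> Bp = B1 * (s * sa / ca)).
  { rewrite Hc. split; intros H.
    - apply (Rmult_eq_reg_l M); [rewrite <- H; field | ]; auto.
    - rewrite H. field. auto. }
  assert (HA2 : B1 * s * (ca * ca - sa * sa) + B1 * (s * sa / ca) * (2 * sa * ca) = B1 * s).
  { field_simplify; [|auto]. pose proof (f_equal (Rmult (B1 * s)) Hpyth). lra. }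
  assert (HB2 : M * (B1 * (s * sa / ca) * (ca * ca - sa * sa) - B1 * s * (2 * sa * ca)) = B1 * - c).
  { rewrite Hc. replace (ca * ca - sa * sa) with (2 * (ca * ca) - 1) by lra. field. auto. }
  unfold vertex_conditions. rewrite HBp. split.
  - intros (_ & -> & <- & -> & ->). auto.
  - intros (-> & -> & -> & ->). repeat split; auto. rewrite Hc. field. auto.
Qed.

End VertexAlgebra.

Definition sinusoidal_gfun (m : nat) (k : R) (u : gfun) (B1 A2 B2 Ap Bp : R) : Prop :=
  (forall x, ge1 u x = sinusoid k 0 B1 x) /\ (forall x, ge2 u x = sinusoid k A2 B2 x) /\
  (forall j, (j < m)%nat -> forall x, gp u j x = sinusoid k Ap Bp x).

Lemma half_mult k : k * (1/2) = k / 2.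
Proof. field. Qed.

Lemma eigenfunction_sinusoidal m eps k u : 0 < k -> sin (k * eps) <> 0 ->
  is_eigenfunction m eps (k * k) u ->
  exists B1 A2 B2 Ap Bp, sinusoidal_gfun m k u B1 A2 B2 Ap Bp /\
    vertex_conditions (INR m) (sin (k/2)) (cos (k/2)) (sin (k * eps)) (cos (k * eps)) B1 A2 B2 Ap Bp.
Proof.
  intros Hk HS (H1 & H2 & Hp & D1 & D2 & C2 & C3 & K2 & K3 & _).
  set (B1 := Derive (ge1 u) 0 / k). set (A2 := ge2 u 0). set (B2 := Derive (ge2 u) 0 / k).
  set (Ap := B1 * sin (k/2)). set (Bp := (A2 - Ap * cos (k * eps)) / sin (k * eps)).
  assert (R1 : forall x, ge1 u x = sinusoid k 0 B1 x).
  { intro x. rewrite (edge_eq_sinusoid k _ Hk H1 x), D1. reflexivity. }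
  assert (R2 : forall x, ge2 u x = sinusoid k A2 B2 x) by exact (edge_eq_sinusoid k _ Hk H2).
  assert (HAp : ge1 u (1/2) = Ap) by (rewrite R1; unfold sinusoid, Ap; rewrite half_mult; ring).
  assert (Rp : forall j, (j < m)%nat -> forall x, gp u j x = sinusoid k Ap Bp x).
  { intros j Hj x. pose proof (C3 j Hj) as E.
    rewrite (edge_eq_sinusoid k _ Hk (Hp j Hj)), C2, HAp in E |- * by auto.
    f_equal. unfold Bp, A2. rewrite <- E. unfold sinusoid. field. split; [lra | auto]. }
  exists B1, A2, B2, Ap, Bp. split; [split; [|split]; auto|].
  rewrite (Derive_sinusoid _ _ _ _ R1), (sumR_ext_const m _ (k * Bp)) in K2
    by (intros j Hj; rewrite (Derive_sinusoid _ _ _ _ (Rp j Hj)), sinusoid_0; reflexivity).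
  rewrite (sumR_ext_const m _ (k * sinusoid k Bp (- Ap) eps)) in K3
    by (intros j Hj; apply (Derive_sinusoid _ _ _ _ (Rp j Hj))).
  rewrite R2 in D2. unfold sinusoid in D2, K2, K3. rewrite half_mult in D2, K2.
  repeat split.
  - lra.
  - unfold Bp. field; auto.
  - apply (Rmult_eq_reg_l k); [|lra]. lra.
  - unfold B2. apply (Rmult_eq_reg_l k); [|lra]. field_simplify; [|lra]. lra.
Qed.

Lemma sinusoidal_eigenfunction m eps k u B1 A2 B2 Ap Bp : 0 < k < 4 * PI -> B1 <> 0 ->
  sinusoidal_gfun m k u B1 A2 B2 Ap Bp ->
  vertex_conditions (INR m) (sin (k/2)) (cos (k/2)) (sin (k * eps)) (cos (k * eps)) B1 A2 B2 Ap Bp ->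
  is_eigenfunction m eps (k * k) u.
Proof.
  intros Hk HB1 (R1 & R2 & Rp) (V4 & V2 & V3 & K2 & K3).
  assert (Hs4 : 0 < sin (k * (1/4))) by (apply sin_gt_0; lra).
  unfold is_eigenfunction. repeat match goal with |- _ /\ _ => split end.
  - apply (edge_eq_ext _ (sinusoid k 0 B1)); [intro; symmetry; apply R1 | apply sinusoid_edge_eq].
  - apply (edge_eq_ext _ (sinusoid k A2 B2)); [intro; symmetry; apply R2 | apply sinusoid_edge_eq].
  - intros j Hj. apply (edge_eq_ext _ (sinusoid k Ap Bp)).
    + intro; symmetry; apply Rp, Hj.
    + apply sinusoid_edge_eq.
  - rewrite R1. apply sinusoid_0.
  - rewrite R2. unfold sinusoid. rewrite half_mult. lra.
  - intros j Hj. rewrite Rp, R1, sinusoid_0 by auto. unfold sinusoid. rewrite half_mult, V2. ring.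
  - intros j Hj. rewrite Rp, R2, sinusoid_0 by auto. unfold sinusoid. lra.
  - rewrite (Derive_sinusoid _ _ _ _ R1), (sumR_ext_const m _ (k * Bp))
      by (intros j Hj; rewrite (Derive_sinusoid _ _ _ _ (Rp j Hj)), sinusoid_0; reflexivity).
    unfold sinusoid. rewrite half_mult. replace (INR m * (k * Bp)) with (k * (INR m * Bp)) by ring.
    rewrite <- K2. ring.
  - rewrite (Derive_sinusoid _ _ _ _ R2), sinusoid_0.
    rewrite (sumR_ext_const m _ (k * sinusoid k Bp (- Ap) eps))
      by (intros j Hj; apply (Derive_sinusoid _ _ _ _ (Rp j Hj))).
    unfold sinusoid. rewrite K3. ring.
  - intros (Z1 & _). specialize (Z1 (1/4) ltac:(lra)). simpl in Z1.
    rewrite R1 in Z1. unfold sinusoid in Z1.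
    apply HB1. apply (Rmult_eq_reg_r (sin (k * (1/4)))); lra.
Qed.

(** The eigenfunctions antisymmetric, resp. symmetric, under the reflection of the graph
    exchanging [e1] with [e2] and reversing the parallel edges; they satisfy the vertex
    conditions exactly when [k] is a root of [secular_anti], resp. [secular_sym]. *)
Definition Ganti (eps k : R) : gfun :=
  mkGfun (fun x => sin (k * x)) (fun x => - sin (k * (1/2 - x)))
         (fun _ x => - (sin (k/2) / sin (k * eps / 2)) * sin (k * (x - eps/2))).

Definition Gsym (eps k : R) : gfun :=
  mkGfun (fun x => sin (k * x)) (fun x => sin (k * (1/2 - x)))
         (fun _ x => (sin (k/2) / cos (k * eps / 2)) * cos (k * (x - eps/2))).

Definition secular_anti (m : nat) (eps k : R) : R :=
  INR m * sin (k/2) * cos (k * eps / 2) + sin (k * eps / 2) * cos (k/2).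

Definition secular_sym (m : nat) (eps k : R) : R :=
  cos (k/2) * cos (k * eps / 2) - INR m * sin (k * eps / 2) * sin (k/2).

Lemma Ganti_sinusoidal m eps k : sin (k * eps / 2) <> 0 ->
  sinusoidal_gfun m k (Ganti eps k) 1 (- sin (k/2)) (cos (k/2)) (sin (k/2))
    (- (sin (k/2) * cos (k * eps / 2) / sin (k * eps / 2))).
Proof.
  intros Hsa. unfold Ganti, sinusoidal_gfun, sinusoid; simpl. split; [|split].
  - intro; ring.
  - intro x. replace (k * (1/2 - x)) with (k/2 - k * x) by field. rewrite sin_minus. ring.
  - intros _ _ x. replace (k * (x - eps/2)) with (k * x - k * eps / 2) by field.
    rewrite sin_minus. field. auto.
Qed.

Lemma Gsym_sinusoidal m eps k : cos (k * eps / 2) <> 0 ->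
  sinusoidal_gfun m k (Gsym eps k) 1 (sin (k/2)) (- cos (k/2)) (sin (k/2))
    (sin (k/2) * sin (k * eps / 2) / cos (k * eps / 2)).
Proof.
  intros Hca. unfold Gsym, sinusoidal_gfun, sinusoid; simpl. split; [|split].
  - intro; ring.
  - intro x. replace (k * (1/2 - x)) with (k/2 - k * x) by field. rewrite sin_minus. ring.
  - intros _ _ x. replace (k * (x - eps/2)) with (k * x - k * eps / 2) by field.
    rewrite cos_minus. field. auto.
Qed.

Definition gmultiple (m : nat) (u G : gfun) : Prop :=
  exists a, a <> 0 /\ (forall x, ge1 u x = a * ge1 G x) /\ (forall x, ge2 u x = a * ge2 G x) /\
    (forall j x, (j < m)%nat -> gp u j x = a * gp G j x).

Lemma sinusoidal_gmultiple m k u G a B1 A2 B2 Ap Bp B1' A2' B2' Ap' Bp' : a <> 0 ->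
  sinusoidal_gfun m k u B1' A2' B2' Ap' Bp' -> sinusoidal_gfun m k G B1 A2 B2 Ap Bp ->
  B1' = a * B1 -> A2' = a * A2 -> B2' = a * B2 -> Ap' = a * Ap -> Bp' = a * Bp ->
  gmultiple m u G.
Proof.
  intros Ha (U1 & U2 & Up) (G1 & G2 & Gp) -> -> -> -> ->.
  exists a. split; [auto|split; [|split]]; intros.
  - rewrite U1, G1, <- sinusoid_scal. f_equal; ring.
  - rewrite U2, G2. apply sinusoid_scal.
  - rewrite Up, Gp by auto. apply sinusoid_scal.
Qed.

Lemma INR_ge_1 m : (1 <= m)%nat -> 1 <= INR m.
Proof. intros H. apply (le_INR 1 m) in H. simpl in H. lra. Qed.

Lemma half_angle_facts a :
  0 < a < PI / 2 -> 0 < sin a /\ 0 < cos a /\ sin a * sin a + cos a * cos a = 1 /\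
  sin (2 * a) = 2 * sin a * cos a /\ cos (2 * a) = cos a * cos a - sin a * sin a.
Proof.
  intros Ha. pose proof (sin2_cos2 a) as P. unfold Rsqr in P.
  split; [apply sin_gt_0; lra|split; [apply cos_gt_0; lra|]].
  split; [lra|]. split; [apply sin_2a | apply cos_2a].
Qed.

Lemma eigenfunction_classify m eps k u : (1 <= m)%nat -> 0 < k -> 0 < k * eps < PI ->
  is_eigenfunction m eps (k * k) u ->
  (secular_anti m eps k = 0 /\ gmultiple m u (Ganti eps k)) \/
  (secular_sym m eps k = 0 /\ gmultiple m u (Gsym eps k)).
Proof.
  intros Hm Hk Hke Hu.
  assert (HM : INR m <> 0) by (pose proof (INR_ge_1 m Hm); lra).
  destruct (half_angle_facts (k * eps / 2)) as (Hsa & Hca & Hpyth & HS & HC); [lra|].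
  replace (2 * (k * eps / 2)) with (k * eps) in HS, HC by field.
  destruct (eigenfunction_sinusoidal m eps k u) as (B1 & A2 & B2 & Ap & Bp & Hsin & Hvc);
    [auto | rewrite HS; nra | auto |].
  rewrite HS, HC in Hvc.
  assert (HB1 : B1 <> 0).
  { intros ->. destruct (vertex_conditions_trivial _ _ _ _ _ HM _ _ _ _ Hvc) as (-> & -> & -> & ->).
    destruct Hu as (_ & _ & _ & _ & _ & _ & _ & _ & _ & Hnz). apply Hnz.
    destruct Hsin as (R1 & R2 & Rp). unfold sinusoid in *.
    split; [|split]; simpl; intros; [rewrite R1 | rewrite R2 | rewrite Rp]; auto; ring. }
  pose proof (vertex_conditions_secular _ _ _ _ _ _ _ _ _ _ Hvc) as Hkey.
  apply Rmult_integral in Hkey as [|Hkey]; [contradiction|].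
  unfold secular_anti, secular_sym.
  apply Rmult_integral in Hkey as [HF | HF]; [left | right]; (split; [lra|]).
  - apply vertex_conditions_anti in Hvc as (E2 & E3 & E4 & E5); [|lra..].
    apply (sinusoidal_gmultiple m k u _ B1 _ _ _ _ _ _ _ _ _ _ HB1 Hsin
             (Ganti_sinusoidal m eps k ltac:(lra))); auto. ring.
  - apply vertex_conditions_sym in Hvc as (E2 & E3 & E4 & E5); [|lra..].
    apply (sinusoidal_gmultiple m k u _ B1 _ _ _ _ _ _ _ _ _ _ HB1 Hsin
             (Gsym_sinusoidal m eps k ltac:(lra))); auto. ring.
Qed.

Lemma Ganti_eigenfunction m eps k : (1 <= m)%nat -> 0 < k < 4 * PI -> 0 < k * eps < PI ->
  secular_anti m eps k = 0 -> is_eigenfunction m eps (k * k) (Ganti eps k).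
Proof.
  intros Hm Hk Hke HF.
  assert (HM : INR m <> 0) by (pose proof (INR_ge_1 m Hm); lra).
  destruct (half_angle_facts (k * eps / 2)) as (Hsa & Hca & Hpyth & HS & HC); [lra|].
  replace (2 * (k * eps / 2)) with (k * eps) in HS, HC by field.
  apply (sinusoidal_eigenfunction m eps k _ 1 _ _ _ _ Hk ltac:(lra) (Ganti_sinusoidal m eps k ltac:(lra))).
  rewrite HS, HC.
  apply vertex_conditions_anti; [exact HM | exact Hpyth | lra | unfold secular_anti in HF; lra |].
  repeat split; ring.
Qed.

Lemma Gsym_eigenfunction m eps k : (1 <= m)%nat -> 0 < k < 4 * PI -> 0 < k * eps < PI ->
  secular_sym m eps k = 0 -> is_eigenfunction m eps (k * k) (Gsym eps k).
Proof.
  intros Hm Hk Hke HF.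
  assert (HM : INR m <> 0) by (pose proof (INR_ge_1 m Hm); lra).
  destruct (half_angle_facts (k * eps / 2)) as (Hsa & Hca & Hpyth & HS & HC); [lra|].
  replace (2 * (k * eps / 2)) with (k * eps) in HS, HC by field.
  apply (sinusoidal_eigenfunction m eps k _ 1 _ _ _ _ Hk ltac:(lra) (Gsym_sinusoidal m eps k ltac:(lra))).
  rewrite HS, HC.
  apply vertex_conditions_sym; [exact HM | exact Hpyth | lra | unfold secular_sym in HF; lra |].
  repeat split; ring.
Qed.

Lemma Derive_affine (u : R -> R) a b : (forall x, u x = a + b * x) -> forall x, Derive u x = b.
Proof. intros E x. rewrite (Derive_ext u _ x E). apply is_derive_unique. auto_derive; auto; ring. Qed.

Lemma eigenvalue_neq_0 m eps u : (1 <= m)%nat -> 0 < eps -> ~ is_eigenfunction m eps 0 u.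
Proof.
  intros Hm He (H1 & H2 & Hp & D1 & D2 & C2 & C3 & K2 & K3 & Hnz).
  pose proof (INR_ge_1 m Hm) as HM.
  set (a := Derive (ge1 u) 0). set (V := ge2 u 0). set (r := Derive (ge2 u) 0).
  set (q := (V - a / 2) / eps).
  assert (R1 : forall x, ge1 u x = 0 + a * x)
    by (intro x; rewrite (edge_eq_affine _ H1 x), D1; reflexivity).
  assert (R2 : forall x, ge2 u x = V + r * x) by exact (edge_eq_affine _ H2).
  assert (Rp : forall j, (j < m)%nat -> forall x, gp u j x = a / 2 + q * x).
  { intros j Hj x. pose proof (C3 j Hj) as E.
    rewrite (edge_eq_affine _ (Hp j Hj)), C2, R1 in E |- * by auto.
    unfold q, V. rewrite <- E. field. lra. }
  rewrite (Derive_affine _ _ _ R1), (sumR_ext_const m _ q) in K2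
    by (intros j Hj; apply (Derive_affine _ _ _ (Rp j Hj))).
  rewrite (sumR_ext_const m _ q) in K3 by (intros j Hj; apply (Derive_affine _ _ _ (Rp j Hj))).
  rewrite R2 in D2.
  assert (HV : V = a / 2 + q * eps) by (unfold q; field; lra).
  fold r in K3.
  assert (Hq : q * (INR m + eps) = 0) by lra.
  apply Rmult_integral in Hq as [Hq | ?]; [|lra].
  rewrite Hq in K2, K3, HV.
  assert (Ha : a = 0) by lra. assert (Hr : r = 0) by lra. assert (HV0 : V = 0) by lra.
  apply Hnz. split; [|split]; simpl; intros; [rewrite R1 | rewrite R2 | rewrite Rp]; auto;
    rewrite ?Ha, ?Hr, ?HV0, ?Hq; lra.
Qed.

Lemma eigenvalue_pos m eps lam u : (1 <= m)%nat -> 0 < eps -> is_eigenfunction m eps lam u -> 0 < lam.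
Proof.
  intros Hm He Hu.
  destruct (Rle_lt_or_eq_dec 0 lam (eigenvalue_nonneg _ _ _ _ He Hu)) as [|<-]; auto.
  exfalso. exact (eigenvalue_neq_0 m eps u Hm He Hu).
Qed.

(** * Roots of the secular functions *)

Lemma decreasing_unique_root (F : R -> R) a b : a < b -> continuity F -> 0 < F a -> F b < 0 ->
  (forall x y, a <= x -> x < y -> y <= b -> F y < F x) ->
  exists r, a < r < b /\ F r = 0 /\ forall x, a <= x <= b -> F x = 0 -> x = r.
Proof.
  intros Hab HF Ha Hb Hdec.
  destruct (IVT (fun x => - F x) a b) as [r [Hr Er]];
    [intro x; apply continuity_pt_opp, HF | lra | lra | lra |].
  assert (r <> a) by (intros ->; lra). assert (r <> b) by (intros ->; lra).
  exists r. split; [lra|split; [lra|]].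
  intros x Hx Ex. destruct (Rtotal_order x r) as [L|[L|L]]; auto.
  - pose proof (Hdec x r); lra.
  - pose proof (Hdec r x); lra.
Qed.

Section SecularRoots.
Variables (m : nat) (eps : R).
Hypothesis Hm : (1 <= m)%nat.
Hypothesis He : 0 < eps.
Hypothesis HMe : INR m * eps <= 1/100.

Let HM : 1 <= INR m := INR_ge_1 m Hm.

Lemma small_angle k : 0 <= k <= 3 * PI ->
  0 <= k * eps / 2 < PI / 4 /\ INR m * (k * eps / 2) <= 3 * PI / 200.
Proof.
  intros Hk. pose proof PI_RGT_0. assert (eps <= 1/100) by nra.
  split; [split|].
  - assert (0 <= k * eps) by nra. lra.
  - assert (k * eps <= 3 * PI * (1/100)) by nra. lra.
  - replace (INR m * (k * eps / 2)) with (k * (INR m * eps) / 2) by field.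
    assert (k * (INR m * eps) <= 3 * PI * (1/100)) by nra. lra.
Qed.

Lemma small_angle_mono k k' : 0 <= k -> k < k' -> k' <= 3 * PI ->
  sin (k * eps / 2) < sin (k' * eps / 2) /\ cos (k' * eps / 2) < cos (k * eps / 2) /\
  0 <= sin (k * eps / 2) /\ 0 < cos (k' * eps / 2).
Proof.
  intros H0 H1 H2. pose proof PI_RGT_0.
  destruct (small_angle k) as [[A0 A1] _]; [lra|].
  destruct (small_angle k') as [[B0 B1] _]; [lra|].
  assert (k * eps / 2 < k' * eps / 2) by (apply Rmult_lt_compat_r; [lra|]; nra).
  split; [|split; [|split]].
  - apply sin_increasing_1; lra.
  - apply cos_decreasing_1; lra.
  - apply sin_ge_0; lra.
  - apply cos_gt_0; lra.
Qed.

Lemma small_angle_pos k : 0 < k <= 3 * PI -> 0 < sin (k * eps / 2) /\ 1 / 2 < cos (k * eps / 2).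
Proof.
  intros Hk. pose proof PI_RGT_0.
  destruct (small_angle k) as [[A0 A1] _]; [lra|].
  assert (0 < k * eps) by nra.
  split; [apply sin_gt_0; lra|].
  rewrite <- cos_PI3. apply cos_decreasing_1; lra.
Qed.

Lemma secular_sym_decreasing k k' : 0 <= k -> k < k' -> k' <= PI ->
  secular_sym m eps k' < secular_sym m eps k.
Proof.
  intros H0 H1 H2. pose proof PI_RGT_0.
  destruct (small_angle_mono k k' H0 H1) as (S1 & C1 & S0 & C0); [lra|].
  unfold secular_sym.
  assert (X1 : cos (k'/2) < cos (k/2)) by (apply cos_decreasing_1; lra).
  assert (X2 : 0 <= cos (k'/2)) by (apply cos_ge_0; lra).
  assert (X3 : sin (k/2) <= sin (k'/2)) by (apply sin_incr_1; lra).
  assert (X4 : 0 <= sin (k/2)) by (apply sin_ge_0; lra).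
  assert (cos (k'/2) * cos (k' * eps / 2) < cos (k/2) * cos (k * eps / 2)).
  { apply Rle_lt_trans with (cos (k'/2) * cos (k * eps / 2)).
    - apply Rmult_le_compat_l; lra.
    - apply Rmult_lt_compat_r; lra. }
  assert (INR m * sin (k * eps / 2) * sin (k/2) <= INR m * sin (k' * eps / 2) * sin (k'/2)).
  { apply Rmult_le_compat; [nra | lra | apply Rmult_le_compat_l; lra | lra]. }
  lra.
Qed.

Lemma secular_sym_neg k : PI <= k <= 2 * PI -> secular_sym m eps k < 0.
Proof.
  intros Hk. pose proof PI_RGT_0.
  destruct (small_angle_pos k) as (Sa & Ca); [lra|].
  unfold secular_sym.
  assert (X1 : cos (k/2) <= 0) by (apply cos_le_0; lra).
  assert (X2 : 0 <= sin (k/2)) by (apply sin_ge_0; lra).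
  destruct (Req_dec (k/2) (PI/2)) as [E|E].
  - rewrite E, cos_PI2, sin_PI2. nra.
  - assert (cos (k/2) < 0) by (apply cos_lt_0; lra).
    assert (0 <= INR m * sin (k * eps / 2) * sin (k/2)) by (apply Rmult_le_pos; nra).
    nra.
Qed.

Lemma secular_sym_increasing k k' : 2 * PI <= k -> k < k' -> k' <= 3 * PI ->
  secular_sym m eps k < secular_sym m eps k'.
Proof.
  intros H0 H1 H2. pose proof PI_RGT_0.
  destruct (small_angle_mono k k') as (S1 & C1 & S0 & C0); try lra.
  unfold secular_sym.
  assert (X1 : cos (k/2) < cos (k'/2)) by (apply cos_increasing_1; lra).
  assert (X2 : cos (k'/2) <= 0) by (apply cos_le_0; lra).
  assert (X3 : sin (k'/2) < sin (k/2)) by (apply sin_decreasing_1; lra).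
  assert (X4 : sin (k/2) <= 0) by (apply sin_le_0; lra).
  assert (cos (k/2) * cos (k * eps / 2) < cos (k'/2) * cos (k' * eps / 2)).
  { apply Rle_lt_trans with (cos (k/2) * cos (k' * eps / 2)); nra. }
  assert (INR m * sin (k * eps / 2) * (- sin (k/2)) <= INR m * sin (k' * eps / 2) * (- sin (k'/2))).
  { apply Rmult_le_compat; [nra | lra | apply Rmult_le_compat_l; lra | lra]. }
  lra.
Qed.

Lemma secular_anti_pos k : 0 < k <= PI -> 0 < secular_anti m eps k.
Proof.
  intros Hk. pose proof PI_RGT_0.
  destruct (small_angle_pos k) as (Sa & Ca); [lra|].
  unfold secular_anti.
  assert (0 < sin (k/2)) by (apply sin_gt_0; lra).
  assert (0 <= cos (k/2)) by (apply cos_ge_0; lra).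
  assert (0 < INR m * sin (k/2) * cos (k * eps / 2)) by (apply Rmult_lt_0_compat; nra).
  nra.
Qed.

Lemma secular_anti_decreasing k k' : PI <= k -> k < k' -> k' <= 2 * PI ->
  secular_anti m eps k' < secular_anti m eps k.
Proof.
  intros H0 H1 H2. pose proof PI_RGT_0.
  destruct (small_angle_mono k k') as (S1 & C1 & S0 & C0); try lra.
  unfold secular_anti.
  assert (X1 : cos (k'/2) < cos (k/2)) by (apply cos_decreasing_1; lra).
  assert (X2 : cos (k/2) <= 0) by (apply cos_le_0; lra).
  assert (X3 : sin (k'/2) < sin (k/2)) by (apply sin_decreasing_1; lra).
  assert (X4 : 0 <= sin (k'/2)) by (apply sin_ge_0; lra).
  assert (INR m * sin (k'/2) * cos (k' * eps / 2) < INR m * sin (k/2) * cos (k * eps / 2)).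
  { rewrite !Rmult_assoc. apply Rmult_lt_compat_l; [lra|].
    apply Rle_lt_trans with (sin (k'/2) * cos (k * eps / 2)).
    - apply Rmult_le_compat_l; lra.
    - apply Rmult_lt_compat_r; lra. }
  assert (sin (k' * eps / 2) * cos (k'/2) <= sin (k * eps / 2) * cos (k/2)).
  { apply Rle_trans with (sin (k' * eps / 2) * cos (k/2)); [apply Rmult_le_compat_l|]; nra. }
  lra.
Qed.

Lemma secular_anti_neg k : 2 * PI <= k <= 3 * PI -> secular_anti m eps k < 0.
Proof.
  intros Hk. pose proof PI_RGT_0.
  destruct (small_angle_pos k) as (Sa & Ca); [lra|].
  unfold secular_anti.
  assert (X1 : cos (k/2) <= 0) by (apply cos_le_0; lra).
  assert (X2 : sin (k/2) <= 0) by (apply sin_le_0; lra).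
  destruct (Req_dec (k/2) PI) as [E|E].
  - rewrite E, cos_PI, sin_PI. nra.
  - assert (sin (k/2) < 0) by (apply sin_lt_0; lra).
    assert (INR m * sin (k/2) < 0) by nra.
    nra.
Qed.

Lemma secular_sym_0 : 0 < secular_sym m eps 0.
Proof.
  unfold secular_sym. replace (0 / 2) with 0 by field. replace (0 * eps / 2) with 0 by field.
  rewrite cos_0, sin_0. lra.
Qed.

Lemma secular_sym_3PI : 0 < secular_sym m eps (3 * PI).
Proof.
  pose proof PI_RGT_0. destruct (small_angle_pos (3 * PI)) as (Sa & Ca); [lra|].
  unfold secular_sym. replace (3 * PI / 2) with (3 * (PI / 2)) by field.
  rewrite cos_3PI2, sin_3PI2. nra.
Qed.

Lemma secular_anti_3PI_2 : 0 < secular_anti m eps (3 * PI / 2).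
Proof.
  pose proof PI_RGT_0. destruct (small_angle_pos (3 * PI / 2)) as (Sa & Ca); [lra|].
  destruct (small_angle (3 * PI / 2)) as [[A0 A1] _]; [lra|].
  assert (Lt : sin (3 * PI / 2 * eps / 2) < cos (3 * PI / 2 * eps / 2)).
  { apply Rlt_le_trans with (sin (PI / 4)); [apply sin_increasing_1; lra|].
    rewrite sin_cos_PI4. left. apply cos_decreasing_1; lra. }
  unfold secular_anti. replace (3 * PI / 2 / 2) with (PI - PI / 4) by field.
  rewrite sin_PI_x, Rtrigo_facts.cos_pi_minus, <- sin_cos_PI4.
  assert (0 < sin (PI / 4)) by (apply sin_gt_0; lra).
  assert (cos (3 * PI / 2 * eps / 2) <= INR m * cos (3 * PI / 2 * eps / 2)) by nra.
  assert (0 < sin (PI / 4) * (INR m * cos (3 * PI / 2 * eps / 2) - sin (3 * PI / 2 * eps / 2)))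
    by (apply Rmult_lt_0_compat; lra).
  nra.
Qed.

Lemma secular_sym_continuity : continuity (secular_sym m eps).
Proof. intro x. apply derivable_continuous_pt, ex_derive_Reals_0. unfold secular_sym. auto_derive; auto. Qed.

Lemma secular_anti_continuity : continuity (secular_anti m eps).
Proof. intro x. apply derivable_continuous_pt, ex_derive_Reals_0. unfold secular_anti. auto_derive; auto. Qed.

Lemma secular_roots : exists k1 k2 k3,
  0 < k1 < PI /\ 3 * PI / 2 < k2 < 2 * PI /\ 2 * PI < k3 < 3 * PI /\
  secular_sym m eps k1 = 0 /\ secular_anti m eps k2 = 0 /\ secular_sym m eps k3 = 0 /\
  (forall k, 0 < k <= 3 * PI -> secular_anti m eps k = 0 -> k = k2) /\
  (forall k, 0 < k <= 3 * PI -> secular_sym m eps k = 0 -> k = k1 \/ k = k3).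
Proof.
  pose proof PI_RGT_0.
  destruct (decreasing_unique_root (secular_sym m eps) 0 PI) as (k1 & Hk1 & E1 & U1);
    [lra | apply secular_sym_continuity | apply secular_sym_0 | apply secular_sym_neg; lra
    | intros; apply secular_sym_decreasing; lra |].
  destruct (decreasing_unique_root (secular_anti m eps) PI (2 * PI)) as (k2 & Hk2 & E2 & U2);
    [lra | apply secular_anti_continuity | apply secular_anti_pos; lra | apply secular_anti_neg; lra
    | intros; apply secular_anti_decreasing; lra |].
  destruct (decreasing_unique_root (fun k => - secular_sym m eps k) (2 * PI) (3 * PI))
    as (k3 & Hk3 & E3 & U3);
    [lra | intro; apply continuity_pt_opp, secular_sym_continuity
    | pose proof (secular_sym_neg (2 * PI)); lra | pose proof secular_sym_3PI; lra
    | intros x y ? ? ?; pose proof (secular_sym_increasing x y); lra |].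
  assert (3 * PI / 2 < k2).
  { pose proof secular_anti_3PI_2. destruct (Rtotal_order k2 (3 * PI / 2)) as [L|[L|L]]; auto.
    - pose proof (secular_anti_decreasing k2 (3 * PI / 2)); lra.
    - rewrite L in E2; lra. }
  exists k1, k2, k3. repeat split; try lra.
  - intros k Hk Ek.
    destruct (Rle_lt_dec k PI); [pose proof (secular_anti_pos k); lra|].
    destruct (Rle_lt_dec (2 * PI) k); [pose proof (secular_anti_neg k); lra|].
    apply U2; lra.
  - intros k Hk Ek.
    destruct (Rle_lt_dec k PI); [left; apply U1; lra|].
    destruct (Rle_lt_dec k (2 * PI)); [pose proof (secular_sym_neg k); lra|].
    right. apply U3; lra.
Qed.

Lemma small_angle_estimates k : 0 < k <= 3 * PI ->
  0 < sin (k * eps / 2) /\ 1/2 < cos (k * eps / 2) /\ INR m * sin (k * eps / 2) <= 6/100.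
Proof.
  intros Hk. pose proof PI_RGT_0. pose proof PI_4.
  destruct (small_angle k) as [[A0 A1] A2]; [lra|].
  destruct (small_angle_pos k Hk) as (S0 & C0).
  split; [|split]; auto.
  assert (sin (k * eps / 2) < k * eps / 2) by (apply sin_lt_x; nra).
  assert (INR m * sin (k * eps / 2) <= INR m * (k * eps / 2)) by (apply Rmult_le_compat_l; lra).
  lra.
Qed.

Lemma secular_roots_sin_bounds k2 k3 : 3 * PI / 2 < k2 < 2 * PI -> 2 * PI < k3 < 3 * PI ->
  secular_anti m eps k2 = 0 -> secular_sym m eps k3 = 0 ->
  0 < sin (k2/2) /\ sin (k3/2) < 0 /\ sin (k2/2) < - sin (k3/2) / 2.
Proof.
  intros Hk2 Hk3 E2 E3. pose proof PI_RGT_0.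
  unfold secular_anti, secular_sym in *.
  destruct (small_angle_estimates k2) as (Sa2 & Ca2 & Ma2); [lra|].
  destruct (small_angle_estimates k3) as (Sa3 & Ca3 & Ma3); [lra|].
  assert (s2p : 0 < sin (k2/2)) by (apply sin_gt_0; lra).
  assert (s3n : sin (k3/2) < 0) by (apply sin_lt_0; lra).
  assert (c2n : -1 <= cos (k2/2)) by (pose proof (COS_bound (k2/2)); lra).
  assert (c3n : cos (k3/2) < 0) by (apply cos_lt_0; lra).
  assert (s3b : -1 <= sin (k3/2)) by (pose proof (SIN_bound (k3/2)); lra).
  split; [auto | split; [auto|]].
  (* the secular equations force sin (k2/2) and cos (k3/2) to be O(m eps) *)
  assert (B2 : sin (k2/2) * (1/2) <= sin (k2 * eps / 2)).
  { assert (INR m * sin (k2/2) * cos (k2 * eps / 2) <= sin (k2 * eps / 2)) by nra.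
    assert (sin (k2/2) * (1/2) <= sin (k2/2) * cos (k2 * eps / 2)) by (apply Rmult_le_compat_l; lra).
    assert (0 <= sin (k2/2) * cos (k2 * eps / 2)) by nra.
    nra. }
  assert (sin (k2 * eps / 2) <= INR m * sin (k2 * eps / 2)) by nra.
  assert (S2 : sin (k2/2) <= 12/100) by lra.
  assert (B3 : - cos (k3/2) * cos (k3 * eps / 2) <= 6/100).
  { replace (- cos (k3/2) * cos (k3 * eps / 2)) with (INR m * sin (k3 * eps / 2) * (- sin (k3/2)))
      by lra.
    assert (INR m * sin (k3 * eps / 2) * (- sin (k3/2)) <= INR m * sin (k3 * eps / 2) * 1)
      by (apply Rmult_le_compat_l; nra).
    lra. }
  assert (C3 : - cos (k3/2) <= 12/100).
  { assert (- cos (k3/2) * (1/2) <= - cos (k3/2) * cos (k3 * eps / 2)) by (apply Rmult_le_compat_l; lra).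
    lra. }
  pose proof (sin2_cos2 (k3/2)) as P. unfold Rsqr in P.
  assert (cos (k3/2) * cos (k3/2) <= 144/10000) by nra.
  assert (- sin (k3/2) >= sin (k3/2) * sin (k3/2)) by nra.
  lra.
Qed.

End SecularRoots.

(** * Sign of the combination *)

Lemma sin_ratio_le k2 k3 y : 0 < k2 <= k3 -> 0 <= y -> k3 * y <= PI ->
  k2 * sin (k3 * y) <= k3 * sin (k2 * y).
Proof.
  intros Hk Hy Hky.
  destruct (MVT_gen (fun t => k3 * sin (k2 * t) - k2 * sin (k3 * t)) 0 y
              (fun t => k3 * k2 * cos (k2 * t) - k2 * k3 * cos (k3 * t))) as [c [Hc E]].
  - intros x _. auto_derive; auto. ring.
  - intros x _. apply derivable_continuous_pt, ex_derive_Reals_0. auto_derive; auto.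
  - rewrite Rmin_left, Rmax_right in Hc by lra.
    rewrite !Rmult_0_r, sin_0 in E.
    assert (cos (k3 * c) <= cos (k2 * c)) by (pose proof PI_RGT_0; apply cos_decr_1; nra).
    assert (0 <= k2 * k3 * (cos (k2 * c) - cos (k3 * c))) by (apply Rmult_le_pos; nra).
    nra.
Qed.

Section CombinationSign.
Variables k2 k3 eps b : R.
Hypothesis Hk2 : 3 * PI / 2 < k2 < 2 * PI.
Hypothesis Hk3 : 2 * PI < k3 < 3 * PI.
Hypothesis He : 0 < eps.
Hypothesis Hke : k3 * eps < PI.
Hypothesis Hb : b * sin (k3/2) = - sin (k2/2).
Hypothesis Hb0 : 0 < b.
Hypothesis Hb2 : b < 1/2.

Lemma combination_pos_e1 x : 0 < x < 1/2 -> 0 < sin (k2 * x) + b * sin (k3 * x).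
Proof.
  intros Hx. pose proof PI_RGT_0.
  destruct (Rle_lt_dec (k3 * x) PI).
  - assert (0 <= sin (k3 * x)) by (apply sin_ge_0; nra).
    assert (0 < sin (k2 * x)) by (apply sin_gt_0; nra).
    nra.
  - assert (sin (k2/2) < sin (k2 * x)) by (apply sin_decreasing_1; nra).
    assert (sin (k3/2) < sin (k3 * x)) by (apply sin_decreasing_1; nra).
    nra.
Qed.

Lemma combination_neg_e2 x : 0 <= x < 1/2 -> - sin (k2 * (1/2 - x)) + b * sin (k3 * (1/2 - x)) < 0.
Proof.
  intros Hx. pose proof PI_RGT_0. set (y := 1/2 - x).
  assert (Hy : 0 < y <= 1/2) by (unfold y; lra).
  assert (0 < sin (k2 * y)) by (apply sin_gt_0; nra).
  destruct (Rle_lt_dec (k3 * y) PI).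
  - assert (k2 * sin (k3 * y) <= k3 * sin (k2 * y)) by (apply sin_ratio_le; lra).
    assert (b * k3 < k2) by nra.
    assert (k2 * (b * sin (k3 * y)) < k2 * sin (k2 * y)) by nra.
    assert (b * sin (k3 * y) < sin (k2 * y)) by nra.
    lra.
  - assert (sin (k3 * y) < 0) by (apply sin_lt_0; nra).
    nra.
Qed.

Lemma combination_neg_parallel x : 0 < x <= eps ->
  - (sin (k2/2) / sin (k2 * eps / 2)) * sin (k2 * (x - eps/2)) +
  b * ((sin (k3/2) / cos (k3 * eps / 2)) * cos (k3 * (x - eps/2))) < 0.
Proof.
  intros Hx. pose proof PI_RGT_0.
  assert (Sa2 : 0 < sin (k2 * eps / 2)) by (apply sin_gt_0; nra).
  assert (Ca3 : 0 < cos (k3 * eps / 2)) by (apply cos_gt_0; nra).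
  assert (s2p : 0 < sin (k2/2)) by (apply sin_gt_0; lra).
  assert (s3n : sin (k3/2) < 0) by (apply sin_lt_0; lra).
  set (A := - (sin (k2/2) / sin (k2 * eps / 2))). set (B := sin (k3/2) / cos (k3 * eps / 2)).
  assert (HA : A < 0) by (unfold A; assert (0 < sin (k2/2) / sin (k2 * eps / 2)) by
    (apply Rdiv_lt_0_compat; lra); lra).
  assert (HB : B < 0) by (unfold B; apply Rdiv_neg_pos; lra).
  set (t := x - eps/2).
  destruct (Rle_lt_dec t 0).
  - (* each term lies below its value at v2, where their sum vanishes *)
    assert (sin (- (k2 * eps / 2)) < sin (k2 * t)).
    { destruct (Req_dec x eps); [unfold t in *; lra|]. apply sin_increasing_1; unfold t in *; nra. }
    assert (cos (k3 * eps / 2) < cos (k3 * t)).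
    { rewrite (cos_sym (k3 * t)). apply cos_decreasing_1; unfold t in *; nra. }
    assert (A * sin (- (k2 * eps / 2)) = sin (k2/2)) by (unfold A; rewrite sin_neg; field; lra).
    assert (B * cos (k3 * eps / 2) = sin (k3/2)) by (unfold B; field; lra).
    assert (A * sin (k2 * t) < A * sin (- (k2 * eps / 2))) by nra.
    assert (b * B * cos (k3 * t) < b * B * cos (k3 * eps / 2)) by (assert (b * B < 0) by nra; nra).
    nra.
  - assert (0 < sin (k2 * t)) by (apply sin_gt_0; unfold t in *; nra).
    assert (0 < cos (k3 * t)) by (apply cos_gt_0; unfold t in *; nra).
    assert (A * sin (k2 * t) < 0) by nra.
    assert (b * B < 0) by nra.
    nra.
Qed.

Lemma Ganti_Gsym_N_is_one m : N_is_one m eps (gadd (Ganti eps k2) (gscale b (Gsym eps k3))).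
Proof.
  exists PtV2. split.
  - split; [exact I|]. simpl. rewrite !half_mult. lra.
  - intros [x|x|j x| |] [Hv Hz]; simpl in Hv, Hz; [exfalso.. | reflexivity | exfalso].
    + pose proof (combination_pos_e1 x Hv). lra.
    + pose proof (combination_neg_e2 x ltac:(lra)). lra.
    + pose proof (combination_neg_parallel x ltac:(lra)). lra.
    + pose proof (combination_neg_e2 0 ltac:(lra)). lra.
Qed.

End CombinationSign.

Lemma N_is_one_scale m eps g h a : a <> 0 ->
  (forall p, valid_point m eps p -> geval g p = a * geval h p) ->
  N_is_one m eps h -> N_is_one m eps g.
Proof.
  intros Ha E (p & (Hv & Hz) & U). exists p. split.
  - split; auto. rewrite E, Hz by auto. ring.
  - intros q (Hq & Hzq). apply U. split; auto.
    rewrite E in Hzq by auto. apply Rmult_integral in Hzq as [|]; [contradiction | auto].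
Qed.

Lemma N_is_one_gmultiple m eps u v G H b : gmultiple m u G -> gmultiple m v H ->
  N_is_one m eps (gadd G (gscale b H)) -> exists b', N_is_one m eps (gadd u (gscale b' v)).
Proof.
  intros (a & Ha & U1 & U2 & Up) (a' & Ha' & V1 & V2 & Vp) HN.
  exists (a * b / a'). apply (N_is_one_scale m eps _ (gadd G (gscale b H)) a Ha); [|exact HN].
  intros [x|x|j x| |] Hv; simpl in Hv |- *; rewrite ?U1, ?V1, ?U2, ?V2, ?Up, ?Vp by tauto; field; auto.
Qed.

(** * The second and third eigenfunctions *)

Lemma gmultiple_gip_neq_0 m eps lam u v G : 0 < eps -> is_eigenfunction m eps lam u ->
  gmultiple m u G -> gmultiple m v G -> gip m eps u v <> 0.
Proof.
  intros He Hu (a & Ha & U1 & U2 & Up) (a' & Ha' & V1 & V2 & Vp).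
  assert (Hvu : geq_on m eps v (gcomb 1 (fun _ => a' / a) (fun _ => u))).
  { split; [|split]; simpl; intros; [rewrite V1, U1 | rewrite V2, U2 | rewrite Vp, Up by auto];
      field; auto. }
  rewrite gip_sym, (gip_geq_on _ _ _ _ _ (Rlt_le _ _ He) Hvu),
    (gip_gcomb m eps 1 _ _ u (fun _ => lam) lam) by auto.
  simpl. pose proof (gip_self_pos _ _ _ _ He Hu).
  assert (a' / a <> 0) by (unfold Rdiv; apply Rmult_integral_contrapositive; split; [|apply Rinv_neq_0_compat]; auto).
  rewrite Rplus_0_l. apply Rmult_integral_contrapositive. split; lra.
Qed.

Section LowSpectrum.
Variables (m : nat) (eps : R) (lam : nat -> R) (f : nat -> gfun) (k1 k2 k3 : R).
Hypothesis Hm : (1 <= m)%nat.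
Hypothesis He : 0 < eps.
Hypothesis Heps : 3 * eps < 1.
Hypothesis Hbasis : is_eigenbasis m eps lam f.
Hypothesis Hk1 : 0 < k1 < PI.
Hypothesis Hk2 : 3 * PI / 2 < k2 < 2 * PI.
Hypothesis Hk3 : 2 * PI < k3 < 3 * PI.
Hypothesis E1 : secular_sym m eps k1 = 0.
Hypothesis E2 : secular_anti m eps k2 = 0.
Hypothesis E3 : secular_sym m eps k3 = 0.
Hypothesis U2 : forall k, 0 < k <= 3 * PI -> secular_anti m eps k = 0 -> k = k2.
Hypothesis U13 : forall k, 0 < k <= 3 * PI -> secular_sym m eps k = 0 -> k = k1 \/ k = k3.

Let small_k_eps k : 0 < k <= 3 * PI -> 0 < k * eps < PI.
Proof. intros Hk. pose proof PI_RGT_0. split; nra. Qed.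

Lemma low_eigenfunction_cases j : lam j <= k3 * k3 ->
  (lam j = k1 * k1 /\ gmultiple m (f j) (Gsym eps k1)) \/
  (lam j = k2 * k2 /\ gmultiple m (f j) (Ganti eps k2)) \/
  (lam j = k3 * k3 /\ gmultiple m (f j) (Gsym eps k3)).
Proof.
  intros Hj. destruct Hbasis as (Hf & _).
  assert (Hp : 0 < lam j) by exact (eigenvalue_pos m eps _ _ Hm He (Hf j)).
  assert (Hsq : sqrt (lam j) * sqrt (lam j) = lam j) by (apply sqrt_sqrt; lra).
  assert (Hk : 0 < sqrt (lam j) <= 3 * PI).
  { split; [apply sqrt_lt_R0; auto|].
    assert (sqrt (lam j) <= sqrt (k3 * k3)) by (apply sqrt_le_1_alt; auto).
    rewrite sqrt_square in H by lra. lra. }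
  pose proof (Hf j) as Hfj. rewrite <- Hsq in Hfj |- *.
  destruct (eigenfunction_classify m eps _ _ Hm (proj1 Hk) (small_k_eps _ Hk) Hfj)
    as [[F P] | [F P]].
  - rewrite (U2 _ Hk F) in P |- *. auto.
  - destruct (U13 _ Hk F) as [Ek | Ek]; rewrite Ek in P |- *; auto.
Qed.

Lemma low_eigenvalue_simple i j : lam i = lam j -> lam j <= k3 * k3 -> i = j.
Proof.
  intros Eij Hj. destruct (Nat.eq_dec i j) as [|Hne]; auto. exfalso.
  destruct Hbasis as (Hf & _ & Horth & _).
  assert (Hi : lam i <= k3 * k3) by lra.
  assert (k1 * k1 < k2 * k2 < k3 * k3) by (pose proof PI_RGT_0; split; nra).
  destruct (low_eigenfunction_cases i Hi) as [(Li & Pi) | [(Li & Pi) | (Li & Pi)]];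
  destruct (low_eigenfunction_cases j Hj) as [(Lj & Pj) | [(Lj & Pj) | (Lj & Pj)]];
  try lra; exact (gmultiple_gip_neq_0 m eps _ _ _ _ He (Hf i) Pi Pj (Horth i j Hne)).
Qed.

Lemma second_third_eigenvalues : lam 1 = k2 * k2 /\ lam 2 = k3 * k3.
Proof.
  pose proof PI_RGT_0. destruct Hbasis as (_ & Hmono & _).
  assert (Hsq : k1 * k1 < k2 * k2 < k3 * k3) by (split; nra).
  destruct (eigenbasis_complete_eigenvalue _ _ _ _ _ _ He Hbasis
    (Gsym_eigenfunction m eps k1 Hm ltac:(lra) (small_k_eps k1 ltac:(lra)) E1)) as [i1 I1].
  destruct (eigenbasis_complete_eigenvalue _ _ _ _ _ _ He Hbasis
    (Ganti_eigenfunction m eps k2 Hm ltac:(lra) (small_k_eps k2 ltac:(lra)) E2)) as [i2 I2].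
  destruct (eigenbasis_complete_eigenvalue _ _ _ _ _ _ He Hbasis
    (Gsym_eigenfunction m eps k3 Hm ltac:(lra) (small_k_eps k3 ltac:(lra)) E3)) as [i3 I3].
  assert (L12 : (i1 < i2)%nat).
  { destruct (Nat.lt_ge_cases i1 i2) as [|Hge]; auto. pose proof (Hmono i2 i1 Hge); lra. }
  assert (L23 : (i2 < i3)%nat).
  { destruct (Nat.lt_ge_cases i2 i3) as [|Hge]; auto. pose proof (Hmono i3 i2 Hge); lra. }
  assert (Mem : forall j, (j <= 2)%nat -> j = i1 \/ j = i2 \/ j = i3).
  { intros j Hj. assert (lam j <= lam i3) by (apply Hmono; lia).
    destruct (low_eigenfunction_cases j ltac:(lra)) as [(Lj & _) | [(Lj & _) | (Lj & _)]];
      [left | right; left | right; right]; apply low_eigenvalue_simple; lra. }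
  assert (i2 = 1%nat /\ i3 = 2%nat) as [<- <-]
    by (pose proof (Mem 0%nat); pose proof (Mem 1%nat); pose proof (Mem 2%nat); lia).
  auto.
Qed.

Lemma second_third_eigenfunctions :
  gmultiple m (f 1) (Ganti eps k2) /\ gmultiple m (f 2) (Gsym eps k3).
Proof.
  pose proof PI_RGT_0. destruct second_third_eigenvalues as [L1 L2].
  assert (k1 * k1 < k2 * k2 < k3 * k3) by (split; nra).
  split.
  - destruct (low_eigenfunction_cases 1 ltac:(lra)) as [(L & _) | [(_ & P) | (L & _)]];
      auto; lra.
  - destruct (low_eigenfunction_cases 2 ltac:(lra)) as [(L & _) | [(L & _) | (_ & P)]];
      auto; lra.
Qed.

End LowSpectrum.

Theorem lemma19 :
  forall m : nat, (1 <= m)%nat ->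
  exists eps : R, 0 < eps /\
    forall (lam : nat -> R) (f : nat -> gfun),
      is_eigenbasis m eps lam f ->
      exists b : R, N_is_one m eps (gadd (f 1%nat) (gscale b (f 2%nat))).
Proof.
  intros m Hm.
  pose proof (INR_ge_1 m Hm) as HM. pose proof PI_RGT_0.
  set (eps := / (100 * INR m)).
  assert (He : 0 < eps) by (apply Rinv_0_lt_compat; lra).
  assert (HMe : INR m * eps <= 1/100) by (unfold eps; right; field; lra).
  exists eps. split; [exact He|]. intros lam f Hbasis.
  destruct (secular_roots m eps Hm He HMe) as (k1 & k2 & k3 & Hk1 & Hk2 & Hk3 & E1 & E2 & E3 & U2 & U13).
  destruct (second_third_eigenfunctions m eps lam f k1 k2 k3) as [F1 F2]; auto; [nra|].
  destruct (secular_roots_sin_bounds m eps Hm He HMe k2 k3) as (s2 & s3 & sb); auto.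
  apply (N_is_one_gmultiple m eps _ _ _ _ (- sin (k2/2) / sin (k3/2)) F1 F2).
  apply Ganti_Gsym_N_is_one; auto.
  - nra.
  - field. lra.
  - apply Rdiv_neg_neg; lra.
  - apply (Rmult_lt_reg_r (- sin (k3/2))); [lra|].
    replace (- sin (k2/2) / sin (k3/2) * - sin (k3/2)) with (sin (k2/2)) by (field; lra). lra.
Qed.
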